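(* Let $1\le p\ne q<\infty$ and let $T\in B(\ell^p)$, $S\in B(\ell^q)$. If $T$ or $S$ is compact, then $T$ and $S$ are not equivalent after extension.
   Context: $\ell^p=\ell^p(\mathbb N)$ over $\mathbb C$; $B(X,Y)$ denotes bounded linear operators; invertibility means bounded inverse; $X\oplus Y$ is the $\ell^2$-direct sum and $\mathrm{id}_X$ the identity. Operators $T\in B(X)$ and $S\in B(Y)$ are equivalent after extension if there exist Banach spaces $X'$, $Y'$ and invertible $E\in B(Y\oplus Y',X\oplus X')$, $F\in B(X\oplus X',Y\oplus Y')$ with $\begin{bmatrix}T&0\\0&\mathrm{id}_{X'}\end{bmatrix}=E\begin{bmatrix}S&0\\0&\mathrm{id}_{Y'}\end{bmatrix}F$. *)

From Stdlib Require Import Reals Lra ClassicalEpsilon FunctionalExtensionality.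
Open Scope R_scope.

Definition C : Type := (R * R)%type.
Definition C0 : C := (0, 0).
Definition C1 : C := (1, 0).
Definition Cadd (a b : C) : C := (fst a + fst b, snd a + snd b).
Definition Copp (a : C) : C := (- fst a, - snd a).
Definition Cmul (a b : C) : C :=
  (fst a * fst b - snd a * snd b, fst a * snd b + snd a * fst b).
Definition Cabs (a : C) : R := sqrt (fst a * fst a + snd a * snd a).

(** Real power t^s for t >= 0, s > 0, with the convention 0^s = 0
    (Stdlib's Rpower 0 s = 1, which would be wrong here). *)
Definition rpow (t s : R) : R := if Rle_dec t 0 then 0 else Rpower t s.

(** Value of a convergent real series (arbitrary if divergent). *)
Definition ser_val (u : nat -> R) : R :=
  epsilon (inhabits 0) (fun l => infinite_sum u l).

(** A "normed space candidate": a carrier type, a membership predicate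
    carving out the actual space, vector operations over C, and a norm. *)
Record VS : Type := mkVS {
  car : Type;
  mem : car -> Prop;
  vzero : car;
  vadd : car -> car -> car;
  vopp : car -> car;
  vscal : C -> car -> car;
  vnorm : car -> R
}.

Arguments mem {v} _.
Arguments vzero {v}.
Arguments vadd {v} _ _.
Arguments vopp {v} _.
Arguments vscal {v} _ _.
Arguments vnorm {v} _.

Definition vsub {V : VS} (x y : car V) : car V := vadd x (vopp y).

Definition is_banach (V : VS) : Prop :=
  mem (@vzero V) /\
  (forall x y : car V, mem x -> mem y -> mem (vadd x y)) /\
  (forall x : car V, mem x -> mem (vopp x)) /\
  (forall (c : C) (x : car V), mem x -> mem (vscal c x)) /\
  (forall x y z : car V, mem x -> mem y -> mem z ->
      vadd x (vadd y z) = vadd (vadd x y) z) /\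
  (forall x y : car V, mem x -> mem y -> vadd x y = vadd y x) /\
  (forall x : car V, mem x -> vadd x vzero = x) /\
  (forall x : car V, mem x -> vadd x (vopp x) = vzero) /\
  (forall x : car V, mem x -> vscal C1 x = x) /\
  (forall (a b : C) (x : car V), mem x -> vscal a (vscal b x) = vscal (Cmul a b) x) /\
  (forall (a : C) (x y : car V), mem x -> mem y ->
      vscal a (vadd x y) = vadd (vscal a x) (vscal a y)) /\
  (forall (a b : C) (x : car V), mem x ->
      vscal (Cadd a b) x = vadd (vscal a x) (vscal b x)) /\
  (forall x : car V, mem x -> 0 <= vnorm x) /\
  (forall x : car V, mem x -> vnorm x = 0 -> x = vzero) /\
  (forall (a : C) (x : car V), mem x -> vnorm (vscal a x) = Cabs a * vnorm x) /\
  (forall x y : car V, mem x -> mem y -> vnorm (vadd x y) <= vnorm x + vnorm y) /\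
  (forall u : nat -> car V, (forall n, mem (u n)) ->
     (forall eps, eps > 0 -> exists N, forall m n, (m >= N)%nat -> (n >= N)%nat ->
         vnorm (vsub (u m) (u n)) < eps) ->
     exists l, mem l /\ Un_cv (fun n => vnorm (vsub (u n) l)) 0).

Definition lp (p : R) : VS := {|
  car := nat -> C;
  mem := fun x => exists l, infinite_sum (fun n => rpow (Cabs (x n)) p) l;
  vzero := fun _ => C0;
  vadd := fun x y n => Cadd (x n) (y n);
  vopp := fun x n => Copp (x n);
  vscal := fun c x n => Cmul c (x n);
  vnorm := fun x => rpow (ser_val (fun n => rpow (Cabs (x n)) p)) (1 / p)
|}.

Definition dsum (V W : VS) : VS := {|
  car := (car V * car W)%type;
  mem := fun z => mem (fst z) /\ mem (snd z);
  vzero := (vzero, vzero);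
  vadd := fun z z' => (vadd (fst z) (fst z'), vadd (snd z) (snd z'));
  vopp := fun z => (vopp (fst z), vopp (snd z));
  vscal := fun c z => (vscal c (fst z), vscal c (snd z));
  vnorm := fun z => sqrt (vnorm (fst z) ^ 2 + vnorm (snd z) ^ 2)
|}.

Definition bounded_op (V W : VS) (f : car V -> car W) : Prop :=
  (forall x, mem x -> mem (f x)) /\
  (forall x y, mem x -> mem y -> f (vadd x y) = vadd (f x) (f y)) /\
  (forall c x, mem x -> f (vscal c x) = vscal c (f x)) /\
  (exists M, forall x, mem x -> vnorm (f x) <= M * vnorm x).

Definition invertible_op (V W : VS) (f : car V -> car W) : Prop :=
  bounded_op V W f /\
  exists g : car W -> car V, bounded_op W V g /\
    (forall x, mem x -> g (f x) = x) /\ (forall y, mem y -> f (g y) = y).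

(** Compact operator: the image of the closed unit ball is relatively
    compact, written sequentially (every sequence in the unit ball has a
    subsequence whose image converges in W). *)
Definition compact_op (V W : VS) (f : car V -> car W) : Prop :=
  forall x : nat -> car V, (forall n, mem (x n) /\ vnorm (x n) <= 1) ->
  exists (phi : nat -> nat) (y : car W),
    (forall n, (phi n < phi (S n))%nat) /\ mem y /\
    Un_cv (fun n => vnorm (vsub (f (x (phi n))) y)) 0.

Definition op_dsum_id {V : VS} (W : VS) (f : car V -> car V)
  : car (dsum V W) -> car (dsum V W) := fun z => (f (fst z), snd z).

Definition equiv_after_ext (X Y : VS) (T : car X -> car X) (S : car Y -> car Y)
  : Prop :=
  exists (X' Y' : VS), is_banach X' /\ is_banach Y' /\
  exists (E : car (dsum Y Y') -> car (dsum X X'))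
         (F : car (dsum X X') -> car (dsum Y Y')),
    invertible_op (dsum Y Y') (dsum X X') E /\
    invertible_op (dsum X X') (dsum Y Y') F /\
    forall z, @mem (dsum X X') z ->
      op_dsum_id X' T z = E (op_dsum_id Y' S (F z)).

(* By symmetry of equivalence after extension we may assume that [T] is compact. From
   [T (+) 1 = E (S (+) 1) F] one extracts the corner [J x = fst (F (x, 0))], a bounded
   operator from l^p to l^q satisfying [|x|_p <= M |J x|_q + K |T x|_p].  Compactness makes
   [T e_(phi n)] converge, and a pigeonhole argument makes any finite set of coordinates of
   [J e_(phi n)] nearly constant along a further subsequence.  This yields humps
   [f_i = e_(phi a_i) - e_(phi b_i)] with [|T f_i|_p] summable and [J f_i] concentrated,
   up to a summable error, on disjoint consecutive blocks, with [|J f_i|_q] bounded above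
   and below.  Then [|f_0 + ... + f_(N-1)|_p = (2N)^(1/p)] whereas its image under [J] has
   norm of order [N^(1/q)], which for large [N] contradicts either the estimate (if p < q)
   or the boundedness of [J] (if q < p). *)

From Stdlib Require Import Reals Lra Lia ClassicalEpsilon FunctionalExtensionality Classical ZArith.
Open Scope R_scope.

(** * Real powers, series and Minkowski's inequality *)

Lemma rpow_ge0 t s : 0 <= rpow t s.
Proof. unfold rpow; destruct (Rle_dec t 0); [lra|unfold Rpower; left; apply exp_pos]. Qed.

Lemma rpow_Rpower t s : 0 < t -> rpow t s = Rpower t s.
Proof. intro h; unfold rpow; destruct (Rle_dec t 0); [lra|auto]. Qed.

Lemma rpow_gt0 t s : 0 < t -> 0 < rpow t s.
Proof. intro h; rewrite rpow_Rpower; auto; unfold Rpower; apply exp_pos. Qed.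

Lemma rpow_0_l s : rpow 0 s = 0.
Proof. unfold rpow; destruct (Rle_dec 0 0); lra. Qed.

Lemma rpow_eq0 t s : 0 <= t -> rpow t s = 0 -> t = 0.
Proof. intros [h|h] e; auto. pose proof (rpow_gt0 t s h); lra. Qed.

Lemma rpow_1_l s : rpow 1 s = 1.
Proof. rewrite rpow_Rpower; [|lra]. unfold Rpower; rewrite ln_1, Rmult_0_r; apply exp_0. Qed.

Lemma rpow_1_r t : 0 <= t -> rpow t 1 = t.
Proof. intros [h|h]; [rewrite rpow_Rpower; auto; apply Rpower_1; auto|subst; apply rpow_0_l]. Qed.

Lemma rpow_rpow t a b : 0 <= t -> rpow (rpow t a) b = rpow t (a * b).
Proof.
  intros [h|h]; [|subst; rewrite !rpow_0_l; auto].
  rewrite (rpow_Rpower t a h), !rpow_Rpower; auto; [apply Rpower_mult|].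
  unfold Rpower; apply exp_pos.
Qed.

Lemma rpow_rpow_inv t r : 0 <= t -> r <> 0 -> rpow (rpow t r) (1 / r) = t.
Proof.
  intros h hr. rewrite rpow_rpow; auto. replace (r * (1 / r)) with 1 by (field; auto).
  apply rpow_1_r; auto.
Qed.

Lemma rpow_inv_rpow t r : 0 <= t -> r <> 0 -> rpow (rpow t (1 / r)) r = t.
Proof.
  intros h hr. rewrite rpow_rpow; auto. replace (1 / r * r) with 1 by (field; auto).
  apply rpow_1_r; auto.
Qed.

Lemma rpow_mult_distr a b s : 0 <= a -> 0 <= b -> rpow (a * b) s = rpow a s * rpow b s.
Proof.
  intros [ha|ha] [hb|hb]; try (subst; rewrite ?Rmult_0_l, ?Rmult_0_r, !rpow_0_l; ring).
  rewrite !rpow_Rpower; auto; [|nra]. symmetry; apply Rpower_mult_distr; auto.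
Qed.

Lemma rpow_le a b s : 0 <= a <= b -> 0 <= s -> rpow a s <= rpow b s.
Proof.
  intros [[ha|ha] hab] hs.
  - rewrite !rpow_Rpower; try lra. apply Rle_Rpower_l; lra.
  - subst; rewrite rpow_0_l; apply rpow_ge0.
Qed.

Lemma rpow_div a b s : 0 <= a -> 0 < b -> rpow (a / b) s = rpow a s / rpow b s.
Proof.
  intros ha hb. unfold Rdiv. rewrite rpow_mult_distr; auto.
  2:{ left; apply Rinv_0_lt_compat; auto. }
  f_equal. rewrite !rpow_Rpower; auto; [|apply Rinv_0_lt_compat; auto].
  replace (/ b) with (Rpower b (- (1))) by (rewrite Rpower_Ropp, Rpower_1; auto).
  rewrite Rpower_mult, <- Rpower_Ropp. f_equal; ring.
Qed.

Lemma rpow_plus t a b : 0 < t -> rpow t (a + b) = rpow t a * rpow t b.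
Proof. intro h; rewrite !rpow_Rpower; auto; apply Rpower_plus. Qed.

Lemma one_le_rpow t s : 1 <= t -> 0 <= s -> 1 <= rpow t s.
Proof. intros ht hs. rewrite <- (rpow_1_l s). apply rpow_le; lra. Qed.

Lemma pow_le_1 x n : 0 <= x <= 1 -> x ^ n <= 1.
Proof. intro h; induction n; simpl; [lra|]. pose proof (pow_le x n ltac:(lra)). nra. Qed.

Lemma rpow_growth al be A B : 0 < be < al ->
  exists N : nat, A * rpow (INR N) be + B < rpow (INR N) al.
Proof.
  intros [hb ha]. set (A' := Rabs A + Rabs B + 1).
  set (X0 := Rmax 1 (rpow (A' + 1) (1 / (al - be)))).
  destruct (archimed X0) as [u1 _].
  assert (hX0 : 1 <= X0) by apply Rmax_l.
  assert (hup : (0 <= up X0)%Z) by (apply le_IZR; lra).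
  exists (Z.to_nat (up X0)).
  rewrite INR_IZR_INZ, Z2Nat.id by auto. set (X := IZR (up X0)).
  assert (e1 : rpow X al = rpow X (al - be) * rpow X be).
  { rewrite <- rpow_plus by (unfold X; lra). f_equal; ring. }
  assert (e2 : 1 <= rpow X be) by (apply one_le_rpow; unfold X; lra).
  assert (e3 : A' + 1 <= rpow X (al - be)).
  { assert (hA' : 0 <= A' + 1)
      by (unfold A'; pose proof (Rabs_pos A); pose proof (Rabs_pos B); lra).
    rewrite <- (rpow_inv_rpow (A' + 1) (al - be)) by lra.
    apply rpow_le; [split; [apply rpow_ge0|]|lra].
    pose proof (Rmax_r 1 (rpow (A' + 1) (1 / (al - be)))) as hmax. fold X0 in hmax.
    unfold X; lra. }
  rewrite e1. unfold A' in e3.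
  pose proof (Rle_abs A); pose proof (Rle_abs B); pose proof (Rabs_pos A); pose proof (Rabs_pos B).
  assert (A * rpow X be <= Rabs A * rpow X be) by (apply Rmult_le_compat_r; lra).
  nra.
Qed.

(* Average [ln y <= y - 1] at [y = u / m] and [y = 1 / m] with weights [l] and [1 - l]. *)
Lemma Rpower_le_affine u l : 0 < u -> 0 <= l <= 1 -> Rpower u l <= l * u + 1 - l.
Proof.
  intros hu hl. set (m := l * u + 1 - l).
  assert (hm : 0 < m) by (unfold m; nra).
  assert (ln_le : forall y, 0 < y -> ln y <= y - 1).
  { intros y hy. pose proof (exp_ineq1_le (ln y)) as h. rewrite exp_ln in h; lra. }
  assert (h1 := ln_le (u / m) ltac:(apply Rdiv_lt_0_compat; auto)).
  assert (h2 := ln_le (1 / m) ltac:(apply Rdiv_lt_0_compat; lra)).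
  unfold Rdiv in h1, h2.
  rewrite ln_mult, ln_Rinv in h1 by (auto; apply Rinv_0_lt_compat; auto).
  rewrite ln_mult, ln_Rinv, ln_1 in h2 by (try apply Rinv_0_lt_compat; lra).
  assert (l * ln u <= ln m).
  { assert (l * (u / m - 1) + (1 - l) * (1 / m - 1) = 0) by (unfold m in *; field; lra). nra. }
  unfold Rpower. rewrite <- (exp_ln m) by auto.
  destruct (Req_dec (l * ln u) (ln m)) as [e|ne]; [rewrite e; lra|].
  left; apply exp_increasing; lra.
Qed.

Lemma bernoulli_rpow s r : 0 <= s -> 1 <= r -> 1 + r * (s - 1) <= rpow s r.
Proof.
  intros [hs|hs] hr; [|subst; rewrite rpow_0_l; lra].
  set (u := rpow s r). assert (hu : 0 < u) by (apply rpow_gt0; auto).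
  assert (hl : 0 <= 1 / r <= 1).
  { split; [left; apply Rdiv_lt_0_compat; lra|].
    apply (Rmult_le_reg_r r); [lra|]. field_simplify; lra. }
  pose proof (Rpower_le_affine u (1 / r) hu hl) as h.
  replace (Rpower u (1 / r)) with s in h
    by (rewrite <- rpow_Rpower by auto; unfold u; rewrite rpow_rpow_inv; lra).
  apply (Rmult_le_compat_r r) in h; [|lra].
  replace ((1 / r * u + 1 - 1 / r) * r) with (u + r - 1) in h by (field; lra). nra.
Qed.

(* Bernoulli's inequality at [t / m]. *)
Lemma rpow_ge_tangent t m r : 0 <= t -> 0 < m -> 1 <= r ->
  rpow m r + r * rpow m r * (t - m) / m <= rpow t r.
Proof.
  intros ht hm hr.
  assert (h := bernoulli_rpow (t / m) r
      ltac:(apply Rmult_le_pos; [|left; apply Rinv_0_lt_compat]; lra) hr).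
  rewrite rpow_div in h; auto. pose proof (rpow_gt0 m r hm).
  apply (Rmult_le_compat_r (rpow m r)) in h; [|lra].
  replace (rpow t r / rpow m r * rpow m r) with (rpow t r) in h by (field; lra).
  replace ((1 + r * (t / m - 1)) * rpow m r) with (rpow m r + r * rpow m r * (t - m) / m) in h
    by (field; lra). auto.
Qed.

Lemma rpow_convex a b l r : 0 <= a -> 0 <= b -> 0 <= l <= 1 -> 1 <= r ->
  rpow (l * a + (1 - l) * b) r <= l * rpow a r + (1 - l) * rpow b r.
Proof.
  intros ha hb hl hr. set (m := l * a + (1 - l) * b).
  assert (hm0 : 0 <= m) by (unfold m; nra). destruct hm0 as [hm|hm].
  - pose proof (rpow_ge_tangent a m r ha hm hr). pose proof (rpow_ge_tangent b m r hb hm hr).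
    assert (l * (rpow m r + r * rpow m r * (a - m) / m)
            + (1 - l) * (rpow m r + r * rpow m r * (b - m) / m) = rpow m r)
      by (unfold m in *; field; lra).
    nra.
  - rewrite <- hm, rpow_0_l. pose proof (rpow_ge0 a r); pose proof (rpow_ge0 b r); nra.
Qed.

Lemma ser_val_eq u l : infinite_sum u l -> ser_val u = l.
Proof.
  intro h. unfold ser_val. apply (uniqueness_sum u); auto.
  apply (epsilon_spec (inhabits 0) (fun l => infinite_sum u l)). exists l; auto.
Qed.

Lemma sum_f_R0_ge0 u N : (forall n, 0 <= u n) -> 0 <= sum_f_R0 u N.
Proof. intro hu. induction N; simpl; auto. specialize (hu (S N)); lra. Qed.

Lemma sum_f_R0_le_infinite_sum u l N :
  (forall n, 0 <= u n) -> infinite_sum u l -> sum_f_R0 u N <= l.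
Proof. intros hu h. apply sum_incr; auto. Qed.

Lemma infinite_sum_term_le u l j : (forall n, 0 <= u n) -> infinite_sum u l -> u j <= l.
Proof.
  intros hu h. eapply Rle_trans; [|apply (sum_f_R0_le_infinite_sum u l j); auto].
  destruct j; simpl; [lra|]. pose proof (sum_f_R0_ge0 u j hu); lra.
Qed.

Lemma infinite_sum_ge0 u l : (forall n, 0 <= u n) -> infinite_sum u l -> 0 <= l.
Proof. intros hu h. pose proof (infinite_sum_term_le u l 0 hu h). specialize (hu 0%nat). lra. Qed.

Lemma infinite_sum_eq0 u l : (forall n, 0 <= u n) -> infinite_sum u l -> l = 0 ->
  forall n, u n = 0.
Proof. intros hu h e n. pose proof (infinite_sum_term_le u l n hu h). specialize (hu n). lra. Qed.

Lemma infinite_sum_of_bounded u B : (forall n, 0 <= u n) -> (forall N, sum_f_R0 u N <= B) ->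
  exists l, infinite_sum u l /\ l <= B.
Proof.
  intros hu hB. assert (g : Un_growing (sum_f_R0 u)).
  { intro n; simpl; specialize (hu (S n)); lra. }
  destruct (growing_cv _ g) as [l hl]. { exists B; intros x [n e]; subst; auto. }
  exists l; split; auto. apply (Rle_cv_lim (Un := sum_f_R0 u) (Vn := fun _ => B)); auto.
  intros e he; exists 0%nat; intros; unfold Rdist; rewrite Rminus_diag, Rabs_R0; auto.
Qed.

Lemma infinite_sum_le_compare u v L : (forall n, 0 <= u n <= v n) -> infinite_sum v L ->
  exists l, infinite_sum u l /\ l <= L.
Proof.
  intros h hv. apply infinite_sum_of_bounded; [intro n; apply h|].
  intro N. eapply Rle_trans; [|apply (sum_f_R0_le_infinite_sum v L N); auto].
  - apply sum_Rle; intros; apply h.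
  - intro n; specialize (h n); lra.
Qed.

Lemma infinite_sum_ext u v l : (forall n, u n = v n) -> infinite_sum u l -> infinite_sum v l.
Proof. intros e h. replace v with u; auto. apply functional_extensionality; auto. Qed.

Lemma infinite_sum_plus u v a b : infinite_sum u a -> infinite_sum v b ->
  infinite_sum (fun n => u n + v n) (a + b).
Proof.
  intros hu hv e he. destruct (CV_plus _ _ _ _ hu hv e he) as [N hN].
  exists N; intros n hn. rewrite sum_plus. apply hN; auto.
Qed.

Lemma infinite_sum_scal u a c : infinite_sum u a -> infinite_sum (fun n => c * u n) (c * a).
Proof.
  intros hu e he. assert (hc : Un_cv (fun _ : nat => c) c).
  { intros e' he'; exists 0%nat; intros; unfold Rdist; rewrite Rminus_diag, Rabs_R0; auto. }
  destruct (CV_mult _ _ _ _ hc hu e he) as [N hN]. exists N; intros n hn.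
  replace (sum_f_R0 (fun n => c * u n) n) with (c * sum_f_R0 u n); [apply hN; auto|].
  clear; induction n; simpl; auto. rewrite <- IHn; ring.
Qed.

Lemma infinite_sum_finite u N : (forall n, (N < n)%nat -> u n = 0) ->
  infinite_sum u (sum_f_R0 u N).
Proof.
  intros h e he. exists N. intros n hn. unfold Rdist.
  replace (sum_f_R0 u n) with (sum_f_R0 u N). rewrite Rminus_diag, Rabs_R0; auto.
  induction hn; auto. simpl. rewrite <- IHhn, h; [ring|lia].
Qed.

Lemma infinite_sum_0 : infinite_sum (fun _ => 0) 0.
Proof.
  exact (infinite_sum_finite (fun _ => 0) 0 (fun _ _ => eq_refl)).
Qed.

Lemma rpow_series_zero r u S : 0 < r -> (forall n, 0 <= u n) ->
  infinite_sum (fun n => rpow (u n) r) S -> S = 0 -> forall n, u n = 0.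
Proof.
  intros hr hu hS e n. apply (rpow_eq0 (u n) r); auto.
  apply (infinite_sum_eq0 (fun n => rpow (u n) r) S); auto. intro; apply rpow_ge0.
Qed.

Section Minkowski.
Variables (r SA SB : R) (a b c : nat -> R).
Hypothesis hr : 1 <= r.
Hypotheses (ha : forall n, 0 <= a n) (hb : forall n, 0 <= b n).
Hypothesis hc : forall n, 0 <= c n <= a n + b n.
Hypothesis hA : infinite_sum (fun n => rpow (a n) r) SA.
Hypothesis hB : infinite_sum (fun n => rpow (b n) r) SB.

Let SA_ge0 : 0 <= SA.
Proof. eapply infinite_sum_ge0; [intro; apply rpow_ge0|eauto]. Qed.
Let SB_ge0 : 0 <= SB.
Proof. eapply infinite_sum_ge0; [intro; apply rpow_ge0|eauto]. Qed.

Let minkowski_of_le u S : infinite_sum (fun n => rpow (u n) r) S ->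
  (forall n, c n <= u n) -> rpow S (1 / r) <= rpow SA (1 / r) + rpow SB (1 / r) ->
  exists SC, infinite_sum (fun n => rpow (c n) r) SC /\
  rpow SC (1 / r) <= rpow SA (1 / r) + rpow SB (1 / r).
Proof.
  intros hS hcu hle.
  destruct (infinite_sum_le_compare (fun n => rpow (c n) r) (fun n => rpow (u n) r) S)
      as [SC [hSC hl]]; auto.
  { intro n; split; [apply rpow_ge0|apply rpow_le; [split; [apply hc|apply hcu]|lra]]. }
  exists SC; split; auto. eapply Rle_trans; [|exact hle].
  apply rpow_le; [split; [eapply infinite_sum_ge0; [intro; apply rpow_ge0|eauto]|auto]|].
  left; apply Rdiv_lt_0_compat; lra.
Qed.

Let minkowski_pos : 0 < SA -> 0 < SB ->
  exists SC, infinite_sum (fun n => rpow (c n) r) SC /\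
  rpow SC (1 / r) <= rpow SA (1 / r) + rpow SB (1 / r).
Proof.
  intros SA0 SB0. assert (hr0 : 0 < 1 / r) by (apply Rdiv_lt_0_compat; lra).
  set (A := rpow SA (1 / r)). set (B := rpow SB (1 / r)).
  assert (eA : rpow A r = SA) by (apply rpow_inv_rpow; lra).
  assert (eB : rpow B r = SB) by (apply rpow_inv_rpow; lra).
  assert (A0 : 0 < A) by (apply rpow_gt0; auto). assert (B0 : 0 < B) by (apply rpow_gt0; auto).
  set (l := A / (A + B)).
  assert (hl : 0 <= l <= 1).
  { unfold l; split; [apply Rmult_le_pos; [lra|left; apply Rinv_0_lt_compat; lra]|].
    apply (Rmult_le_reg_r (A + B)); [lra|]; field_simplify; lra. }
  (* [a + b] is [A + B] times a convex combination of [a / A] and [b / B], whose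
     [r]-th powers have sum one. *)
  set (v := fun n => rpow (A + B) r * (l * (rpow (a n) r / SA) + (1 - l) * (rpow (b n) r / SB))).
  assert (hv : infinite_sum v (rpow (A + B) r)).
  { assert (hA1 := infinite_sum_scal _ _ (l / SA) hA).
    assert (hB1 := infinite_sum_scal _ _ ((1 - l) / SB) hB).
    assert (h := infinite_sum_scal _ _ (rpow (A + B) r) (infinite_sum_plus _ _ _ _ hA1 hB1)).
    replace (rpow (A + B) r * (l / SA * SA + (1 - l) / SB * SB)) with (rpow (A + B) r) in h
      by (field; lra).
    eapply infinite_sum_ext; [|exact h]. intro n; unfold v, Rdiv; ring. }
  destruct (infinite_sum_le_compare (fun n => rpow (c n) r) v (rpow (A + B) r))
    as [SC [hSC hle]]; auto.
  - intro n. split; [apply rpow_ge0|].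
    assert (ec : a n + b n = (A + B) * (l * (a n / A) + (1 - l) * (b n / B)))
      by (unfold l; field; lra).
    assert (ha' : 0 <= a n / A)
        by (apply Rmult_le_pos; [apply ha|left; apply Rinv_0_lt_compat; lra]).
    assert (hb' : 0 <= b n / B)
        by (apply Rmult_le_pos; [apply hb|left; apply Rinv_0_lt_compat; lra]).
    eapply Rle_trans; [apply rpow_le; [apply hc|lra]|].
    rewrite ec, rpow_mult_distr by nra. unfold v.
    apply Rmult_le_compat_l; [apply rpow_ge0|].
    rewrite <- eA, <- eB, <- !rpow_div by auto. apply rpow_convex; auto.
  - exists SC; split; auto.
    replace (A + B) with (rpow (rpow (A + B) r) (1 / r)) by (apply rpow_rpow_inv; lra).
    apply rpow_le; [split; [eapply infinite_sum_ge0; [intro; apply rpow_ge0|eauto]|]|]; lra.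
Qed.

Lemma minkowski_series :
  exists SC, infinite_sum (fun n => rpow (c n) r) SC /\
  rpow SC (1 / r) <= rpow SA (1 / r) + rpow SB (1 / r).
Proof.
  pose proof (rpow_ge0 SA (1 / r)). pose proof (rpow_ge0 SB (1 / r)).
  destruct SA_ge0 as [SA0|SA0]; [destruct SB_ge0 as [SB0|SB0]|].
  - apply minkowski_pos; auto.
  - apply (minkowski_of_le a SA); auto; [|lra].
    intro n. pose proof (hc n).
    assert (b n = 0) by (apply (rpow_series_zero r b SB); auto; lra). lra.
  - apply (minkowski_of_le b SB); auto; [|lra].
    intro n. pose proof (hc n).
    assert (a n = 0) by (apply (rpow_series_zero r a SA); auto; lra). lra.
Qed.

End Minkowski.

(** * The sequence spaces [l^r] *)

Lemma Cabs_ge0 a : 0 <= Cabs a.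
Proof. apply sqrt_pos. Qed.

Lemma Cabs_C0 : Cabs C0 = 0.
Proof. unfold Cabs, C0; simpl. replace (0 * 0 + 0 * 0) with 0 by ring. apply sqrt_0. Qed.

Lemma Cabs_C1 : Cabs C1 = 1.
Proof. unfold Cabs, C1; simpl. replace (1 * 1 + 0 * 0) with 1 by ring. apply sqrt_1. Qed.

Lemma Cabs_opp a : Cabs (Copp a) = Cabs a.
Proof. unfold Cabs, Copp; simpl. f_equal; ring. Qed.

Lemma Cabs_triangle a b : Cabs (Cadd a b) <= Cabs a + Cabs b.
Proof.
  destruct a as [x y], b as [u v]; unfold Cabs, Cadd; simpl.
  set (A := sqrt (x * x + y * y)). set (B := sqrt (u * u + v * v)).
  assert (hA : A * A = x * x + y * y) by (apply sqrt_sqrt; nra).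
  assert (hB : B * B = u * u + v * v) by (apply sqrt_sqrt; nra).
  pose proof (sqrt_cauchy x y u v) as hc. unfold Rsqr in hc. fold A B in hc.
  pose proof (sqrt_pos (x * x + y * y)); pose proof (sqrt_pos (u * u + v * v)).
  rewrite <- (sqrt_square (A + B)) by (unfold A, B; lra).
  apply sqrt_le_1_alt. nra.
Qed.

Lemma Cabs_fst a : Rabs (fst a) <= Cabs a.
Proof.
  destruct a as [x y]; unfold Cabs; simpl. rewrite <- sqrt_Rsqr_abs.
  apply sqrt_le_1_alt. unfold Rsqr; nra.
Qed.

Lemma Cabs_snd a : Rabs (snd a) <= Cabs a.
Proof.
  destruct a as [x y]; unfold Cabs; simpl. rewrite <- sqrt_Rsqr_abs.
  apply sqrt_le_1_alt. unfold Rsqr; nra.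
Qed.

Lemma Cabs_le_Rabs_fst_snd a : Cabs a <= Rabs (fst a) + Rabs (snd a).
Proof.
  destruct a as [x y]; unfold Cabs; simpl.
  pose proof (Rabs_pos x); pose proof (Rabs_pos y).
  rewrite <- (sqrt_square (Rabs x + Rabs y)) by lra. apply sqrt_le_1_alt.
  assert (x * x = Rabs x * Rabs x) by (rewrite <- Rabs_mult, Rabs_right; nra).
  assert (y * y = Rabs y * Rabs y) by (rewrite <- Rabs_mult, Rabs_right; nra). nra.
Qed.

Definition sadd (x y : nat -> C) : nat -> C := fun n => Cadd (x n) (y n).
Definition sscale (c : C) (x : nat -> C) : nat -> C := fun n => Cmul c (x n).
Definition sopp (x : nat -> C) : nat -> C := fun n => Copp (x n).
Definition ssub (x y : nat -> C) : nat -> C := sadd x (sopp y).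
Definition szero : nat -> C := fun _ => C0.

Definition pterm (r : R) (x : nat -> C) : nat -> R := fun n => rpow (Cabs (x n)) r.
Definition in_lp (r : R) (x : nat -> C) : Prop := exists l, infinite_sum (pterm r x) l.
Definition lp_norm (r : R) (x : nat -> C) : R := rpow (ser_val (pterm r x)) (1 / r).

Lemma pterm_ge0 r x n : 0 <= pterm r x n.
Proof. apply rpow_ge0. Qed.

Lemma lp_norm_ge0 r x : 0 <= lp_norm r x.
Proof. apply rpow_ge0. Qed.

Lemma lp_norm_eq r x S : infinite_sum (pterm r x) S -> lp_norm r x = rpow S (1 / r).
Proof. intro h; unfold lp_norm; rewrite (ser_val_eq _ S h); auto. Qed.

Lemma rpow_lp_norm r x S : 1 <= r -> infinite_sum (pterm r x) S -> rpow (lp_norm r x) r = S.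
Proof.
  intros hr h. rewrite (lp_norm_eq r x S h). apply rpow_inv_rpow; [|lra].
  eapply infinite_sum_ge0; [apply pterm_ge0|eauto].
Qed.

Lemma lp_triangle r x y : 1 <= r -> in_lp r x -> in_lp r y ->
  in_lp r (sadd x y) /\ lp_norm r (sadd x y) <= lp_norm r x + lp_norm r y.
Proof.
  intros hr [SA hA] [SB hB].
  destruct (minkowski_series r SA SB (fun n => Cabs (x n)) (fun n => Cabs (y n))
    (fun n => Cabs (sadd x y n))) as [SC [h1 h2]]; auto; try (intro; apply Cabs_ge0).
  - intro n; split; [apply Cabs_ge0|apply Cabs_triangle].
  - split; [exists SC; auto|].
    rewrite (lp_norm_eq _ _ _ h1), (lp_norm_eq _ _ _ hA), (lp_norm_eq _ _ _ hB); auto.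
Qed.

Lemma pterm_sopp r x : pterm r (sopp x) = pterm r x.
Proof. apply functional_extensionality; intro n; unfold pterm, sopp; rewrite Cabs_opp; auto. Qed.

Lemma lp_sub r x y : 1 <= r -> in_lp r x -> in_lp r y ->
  in_lp r (ssub x y) /\ lp_norm r (ssub x y) <= lp_norm r x + lp_norm r y.
Proof.
  intros hr hx hy.
  replace (lp_norm r y) with (lp_norm r (sopp y)) by (unfold lp_norm; rewrite pterm_sopp; auto).
  apply lp_triangle; auto. unfold in_lp; rewrite pterm_sopp; auto.
Qed.

Lemma Cabs_le_lp_norm r x j : 1 <= r -> in_lp r x -> Cabs (x j) <= lp_norm r x.
Proof.
  intros hr [S hS]. rewrite (lp_norm_eq _ _ _ hS).
  rewrite <- (rpow_rpow_inv (Cabs (x j)) r); [|apply Cabs_ge0|lra].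
  apply rpow_le; [split; [apply rpow_ge0|]|left; apply Rdiv_lt_0_compat; lra].
  apply (infinite_sum_term_le (pterm r x)); auto using pterm_ge0.
Qed.

Lemma pterm_szero r : pterm r szero = fun _ => 0.
Proof.
  apply functional_extensionality; intro; unfold pterm, szero; rewrite Cabs_C0, rpow_0_l; auto.
Qed.

Lemma lp_szero r : in_lp r szero /\ lp_norm r szero = 0.
Proof.
  assert (h : infinite_sum (pterm r szero) 0) by (rewrite pterm_szero; exact infinite_sum_0).
  split; [eexists; eauto|]. rewrite (lp_norm_eq _ _ _ h), rpow_0_l; auto.
Qed.

Lemma lp_dominated r x y : 0 < r -> (forall n, Cabs (x n) <= Cabs (y n)) -> in_lp r y ->
  in_lp r x /\ lp_norm r x <= lp_norm r y.
Proof.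
  intros hr hle [S hS].
  destruct (infinite_sum_le_compare (pterm r x) (pterm r y) S) as [S' [h1 h2]]; auto.
  { intro n; split; [apply pterm_ge0|]. apply rpow_le; [split; [apply Cabs_ge0|apply hle]|lra]. }
  split; [eexists; eauto|]. rewrite (lp_norm_eq _ _ _ h1), (lp_norm_eq _ _ _ hS).
  apply rpow_le; [split; [eapply infinite_sum_ge0; [apply pterm_ge0|eauto]|auto]|].
  left; apply Rdiv_lt_0_compat; lra.
Qed.

Lemma pterm_sadd_disjoint r x y n : 0 < r -> x n = C0 \/ y n = C0 ->
  pterm r (sadd x y) n = pterm r x n + pterm r y n.
Proof.
  intros hr [h|h]; unfold pterm, sadd; rewrite h, Cabs_C0, rpow_0_l; rewrite ?Rplus_0_l, ?Rplus_0_r;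
    f_equal; f_equal; [destruct (y n)|destruct (x n)]; unfold Cadd, C0; simpl; f_equal; ring.
Qed.

Lemma infinite_sum_sadd_disjoint r x y S1 S2 : 0 < r -> (forall n, x n = C0 \/ y n = C0) ->
  infinite_sum (pterm r x) S1 -> infinite_sum (pterm r y) S2 ->
  infinite_sum (pterm r (sadd x y)) (S1 + S2).
Proof.
  intros hr hd h1 h2. eapply infinite_sum_ext; [|apply (infinite_sum_plus _ _ _ _ h1 h2)].
  intro n; symmetry; apply pterm_sadd_disjoint; auto.
Qed.

Definition basis (n : nat) : nat -> C := fun k => if Nat.eqb k n then C1 else C0.

Lemma basis_neq n k : k <> n -> basis n k = C0.
Proof. intro h; unfold basis. destruct (Nat.eqb_spec k n); [lia|auto]. Qed.

Lemma infinite_sum_pterm_basis r n : 0 < r -> infinite_sum (pterm r (basis n)) 1.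
Proof.
  intro hr.
  assert (e : forall k, pterm r (basis n) k = if Nat.eqb k n then 1 else 0).
  { intro k; unfold pterm, basis. destruct (Nat.eqb k n).
    - rewrite Cabs_C1, rpow_1_l; auto.
    - rewrite Cabs_C0, rpow_0_l; auto. }
  replace 1 with (sum_f_R0 (pterm r (basis n)) n).
  - apply infinite_sum_finite. intros k hk; rewrite e. destruct (Nat.eqb_spec k n); [lia|auto].
  - destruct n as [|n]; [simpl; rewrite e; auto|].
    rewrite tech5, sum_eq_R0, e, Nat.eqb_refl; [ring|].
    intros k hk; rewrite e. destruct (Nat.eqb_spec k (S n)); [lia|auto].
Qed.

Lemma lp_basis r n : 1 <= r -> in_lp r (basis n) /\ lp_norm r (basis n) = 1.
Proof.
  intro hr. assert (h := infinite_sum_pterm_basis r n ltac:(lra)).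
  split; [exists 1; auto|]. rewrite (lp_norm_eq _ _ 1 h); apply rpow_1_l.
Qed.

Lemma infinite_sum_pterm_basis_sub r a b : 1 <= r -> a <> b ->
  infinite_sum (pterm r (ssub (basis a) (basis b))) 2.
Proof.
  intros hr hab. replace 2 with (1 + 1) by ring.
  apply infinite_sum_sadd_disjoint; [lra| |apply infinite_sum_pterm_basis; lra|].
  - intro n. destruct (Nat.eq_dec n a) as [->|ne]; [right|left; apply basis_neq; auto].
    unfold sopp; rewrite basis_neq by auto. unfold Copp, C0; simpl; f_equal; ring.
  - rewrite pterm_sopp. apply infinite_sum_pterm_basis; lra.
Qed.

Fixpoint ssum (u : nat -> nat -> C) (N : nat) : nat -> C :=
  match N with O => szero | S N' => sadd (ssum u N') (u N') end.

Lemma lp_ssum_geometric r u c N : 1 <= r ->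
  (forall i, in_lp r (u i) /\ lp_norm r (u i) <= c * (/ 2) ^ i) ->
  in_lp r (ssum u N) /\ lp_norm r (ssum u N) <= 2 * c.
Proof.
  intros hr hu.
  assert (hc : 0 <= c).
  { destruct (hu 0%nat) as [_ h]. pose proof (lp_norm_ge0 r (u 0%nat)). simpl in h. lra. }
  enough (in_lp r (ssum u N) /\ lp_norm r (ssum u N) <= 2 * c - 2 * c * (/ 2) ^ N)
    by (pose proof (pow_le (/ 2) N ltac:(lra)); split; [tauto|nra]).
  induction N as [|N [hm hn]]; simpl.
  - destruct (lp_szero r) as [hz e]; rewrite e; split; auto; lra.
  - destruct (hu N) as [hmN hnN]. destruct (lp_triangle r _ _ hr hm hmN) as [hs hle].
    split; auto. lra.
Qed.

Section DisjointBlocks.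
Variables (r lo hi : R) (u : nat -> nat -> C) (s : nat -> nat).
Hypothesis hr : 0 < r.
Hypothesis hs : forall i, (s i <= s (S i))%nat.
Hypothesis hsupp : forall i j, (j < s i \/ s (S i) <= j)%nat -> u i j = C0.
Hypothesis hblock : forall i, exists l, infinite_sum (pterm r (u i)) l /\ lo <= l <= hi.

Lemma ssum_vanishes_after N j : (s N <= j)%nat -> ssum u N j = C0.
Proof.
  induction N as [|N IH]; intro hj; [reflexivity|].
  pose proof (hs N). simpl; unfold sadd. rewrite IH, hsupp by lia.
  unfold Cadd, C0; simpl; f_equal; ring.
Qed.

Lemma infinite_sum_pterm_ssum_disjoint N :
  exists l, infinite_sum (pterm r (ssum u N)) l /\ INR N * lo <= l <= INR N * hi.
Proof.
  induction N as [|N [l [hl hb]]].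
  - exists 0; simpl; rewrite pterm_szero; split; [exact infinite_sum_0|lra].
  - destruct (hblock N) as [l' [hl' hb']]. exists (l + l'). split.
    + apply infinite_sum_sadd_disjoint; auto. intro j.
      destruct (le_lt_dec (s N) j); [left; apply ssum_vanishes_after; auto|right; apply hsupp; lia].
    + rewrite S_INR. lra.
Qed.

End DisjointBlocks.

Definition srestrict (P : nat -> bool) (x : nat -> C) : nat -> C :=
  fun j => if P j then x j else C0.

Lemma sadd_srestrict_compl P x : x = sadd (srestrict P x) (srestrict (fun j => negb (P j)) x).
Proof.
  apply functional_extensionality; intro j; unfold sadd, srestrict.
  destruct (P j), (x j); unfold Cadd, C0; simpl; f_equal; ring.
Qed.

Lemma Cabs_srestrict_le P x j : Cabs (srestrict P x j) <= Cabs (x j).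
Proof. unfold srestrict; destruct (P j); [lra|rewrite Cabs_C0; apply Cabs_ge0]. Qed.

Definition trunc_lt (m : nat) (u : nat -> R) : nat -> R := fun j => if Nat.ltb j m then u j else 0.
Definition trunc_ge (m : nat) (u : nat -> R) : nat -> R := fun j => if Nat.leb m j then u j else 0.

Lemma sum_trunc_ge k u N :
  sum_f_R0 (trunc_ge (S k) u) N = sum_f_R0 u N - sum_f_R0 u (Nat.min N k).
Proof.
  induction N as [|N IH]; [simpl; unfold trunc_ge; simpl; ring|].
  rewrite (tech5 (trunc_ge _ u)), (tech5 u), IH. unfold trunc_ge.
  destruct (Nat.leb_spec (S k) (S N)).
  - replace (Nat.min (S N) k) with (Nat.min N k) by lia. ring.
  - replace (Nat.min (S N) k) with (S N) by lia. replace (Nat.min N k) with N by lia.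
    rewrite tech5; ring.
Qed.

Lemma trunc_ge_small u l tau : (forall n, 0 <= u n) -> infinite_sum u l -> 0 < tau ->
  exists m0, forall m, (m0 <= m)%nat -> exists l', infinite_sum (trunc_ge m u) l' /\ l' <= tau.
Proof.
  intros hu hl ht. destruct (hl tau ht) as [N0 hN0]. exists (S N0). intros [|k] hk; [lia|].
  apply infinite_sum_of_bounded.
  { intro n; unfold trunc_ge; destruct (Nat.leb (S k) n); auto; lra. }
  intro N. rewrite sum_trunc_ge.
  destruct (le_lt_dec N k) as [hNk|hkN]; [replace (Nat.min N k) with N by lia; lra|].
  replace (Nat.min N k) with k by lia.
  pose proof (sum_f_R0_le_infinite_sum u l N hu hl). specialize (hN0 k ltac:(lia)).
  unfold Rdist in hN0. apply Rabs_def2 in hN0. lra.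
Qed.

Lemma trunc_lt_small u m c : 0 <= c -> (forall j, (j < m)%nat -> 0 <= u j <= c) ->
  exists l, infinite_sum (trunc_lt m u) l /\ l <= INR m * c.
Proof.
  intros hc hb. exists (sum_f_R0 (trunc_lt m u) m). split.
  - apply infinite_sum_finite. intros n hn; unfold trunc_lt.
    destruct (Nat.ltb_spec n m); [lia|auto].
  - destruct m as [|m]; [simpl; unfold trunc_lt; simpl; lra|].
    replace (sum_f_R0 (trunc_lt (S m) u) (S m)) with (sum_f_R0 u m)
      by (rewrite tech5; unfold trunc_lt at 2; rewrite Nat.ltb_irrefl, Rplus_0_r;
          apply sum_eq; intros i hi; unfold trunc_lt; destruct (Nat.ltb_spec i (S m)); auto; lia).
    rewrite Rmult_comm, <- sum_cte. apply sum_Rle. intros n hn; apply hb; lia.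
Qed.

Lemma bounded_op_pos_bound (V W : VS) f : bounded_op V W f ->
  (forall x, @mem V x -> 0 <= vnorm x) ->
  exists M, 0 < M /\ forall x, mem x -> vnorm (f x) <= M * vnorm x.
Proof.
  intros [_ [_ [_ [M hM]]]] hn. exists (Rabs M + 1). split; [pose proof (Rabs_pos M); lra|].
  intros x hx. specialize (hM x hx). specialize (hn x hx). pose proof (Rle_abs M). nra.
Qed.

Lemma ssum_sadd u v N : ssum (fun i => sadd (u i) (v i)) N = sadd (ssum u N) (ssum v N).
Proof.
  induction N as [|N IH]; simpl.
  - apply functional_extensionality; intro j; unfold sadd, szero, Cadd, C0; simpl; f_equal; ring.
  - rewrite IH. apply functional_extensionality; intro j; unfold sadd.
    destruct (ssum u N j), (ssum v N j), (u N j), (v N j); unfold Cadd; simpl; f_equal; ring.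
Qed.

Section LpOperator.
Variables (r s : R) (L : (nat -> C) -> (nat -> C)).
Hypothesis hr : 1 <= r.
Hypothesis hL : bounded_op (lp r) (lp s) L.

Lemma lp_op_in_lp x : in_lp r x -> in_lp s (L x).
Proof. apply hL. Qed.

Lemma lp_op_bound : exists M, 0 < M /\ forall x, in_lp r x -> lp_norm s (L x) <= M * lp_norm r x.
Proof. apply (bounded_op_pos_bound (lp r) (lp s) L hL). intros; apply lp_norm_ge0. Qed.

Lemma lp_op_sub x y : in_lp r x -> in_lp r y -> L (ssub x y) = ssub (L x) (L y).
Proof.
  intros hx hy. destruct hL as [_ [hadd [hscal _]]].
  assert (hopp : forall z, sopp z = sscale (- (1), 0) z).
  { intro z; apply functional_extensionality; intro n; unfold sopp, sscale.
    destruct (z n); unfold Copp, Cmul; simpl; f_equal; ring. }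
  assert (hmy : in_lp r (sopp y)) by (unfold in_lp; rewrite pterm_sopp; exact hy).
  assert (e : L (sadd x (sopp y)) = sadd (L x) (L (sopp y))) by exact (hadd x (sopp y) hx hmy).
  unfold ssub. rewrite e, !hopp. f_equal. exact (hscal _ y hy).
Qed.

Lemma lp_op_szero : L szero = szero.
Proof.
  destruct hL as [_ [_ [hscal _]]].
  assert (e : szero = sscale C0 szero).
  { apply functional_extensionality; intro; unfold szero, sscale, Cmul, C0; simpl; f_equal; ring. }
  rewrite e at 1. transitivity (sscale C0 (L szero));
    [exact (hscal C0 szero (proj1 (lp_szero r)))|].
  apply functional_extensionality; intro n; unfold sscale, szero.
  destruct (L szero n); unfold Cmul, C0; simpl; f_equal; ring.
Qed.

Lemma lp_op_ssum u N : (forall i, in_lp r (u i)) ->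
  in_lp r (ssum u N) /\ L (ssum u N) = ssum (fun i => L (u i)) N.
Proof.
  intro hu. destruct hL as [_ [hadd _]].
  induction N as [|N [hm e]]; simpl; [split; [apply lp_szero|apply lp_op_szero]|].
  split; [apply lp_triangle; auto|].
  rewrite <- e. exact (hadd _ _ hm (hu N)).
Qed.

End LpOperator.

(** * Selecting infinitely many almost equal terms *)

Definition infinitely_often (P : nat -> Prop) : Prop := forall N, exists n, (N <= n)%nat /\ P n.

Lemma infinitely_often_pair (P : nat -> Prop) N : infinitely_often P ->
  exists a b, (N <= a)%nat /\ (a < b)%nat /\ P a /\ P b.
Proof.
  intro h. destruct (h N) as [a [ha pa]]. destruct (h (S a)) as [b [hb pb]].
  exists a, b; repeat split; auto; lia.
Qed.

Lemma infinitely_often_pigeonhole K (c : nat -> nat) (P : nat -> Prop) :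
  infinitely_often P -> (forall n, P n -> (c n < K)%nat) ->
  exists k, infinitely_often (fun n => P n /\ c n = k).
Proof.
  revert P. induction K as [|K IH]; intros P hP hc.
  - destruct (hP 0%nat) as [n [_ hn]]. specialize (hc n hn). lia.
  - destruct (classic (infinitely_often (fun n => P n /\ c n = K))) as [h|h]; [exists K; auto|].
    assert (exists N0, forall n, (N0 <= n)%nat -> ~ (P n /\ c n = K)) as [N0 hN0].
    { apply NNPP; intro hno. apply h. intro N. apply NNPP; intro hN. apply hno. exists N.
      intros n hn hh. apply hN. exists n; auto. }
    destruct (IH (fun n => P n /\ (N0 <= n)%nat)) as [k hk].
    + intro N. destruct (hP (max N N0)) as [n [hn1 hn2]]. exists n; split; [lia|split; auto; lia].
    + intros n [hn1 hn2]. specialize (hc n hn1).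
      assert (c n <> K) by (intro e; apply (hN0 n hn2); auto). lia.
    + exists k. intro N. destruct (hk N) as [n [hn [[h1 h2] h3]]]. exists n; auto.
Qed.

Lemma Rabs_le_between a b : Rabs a <= b -> - b <= a <= b.
Proof. unfold Rabs; destruct (Rcase_abs a); lra. Qed.

Lemma up_le x y : x <= y -> (up x <= up y)%Z.
Proof.
  intro h. destruct (archimed x) as [a1 a2]. destruct (archimed y) as [b1 b2].
  assert (h' : IZR (up x) < IZR (up y) + 1) by lra.
  rewrite <- plus_IZR in h'. apply lt_IZR in h'. lia.
Qed.

(* Pigeonhole on the finitely many intervals of length [eta] covering [[-B, B]]. *)
Lemma infinitely_often_close (s : nat -> R) B eta (P : nat -> Prop) : 0 < eta ->
  infinitely_often P -> (forall n, P n -> Rabs (s n) <= B) ->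
  exists P', (forall n, P' n -> P n) /\ infinitely_often P' /\
    forall n n', P' n -> P' n' -> Rabs (s n - s n') < eta.
Proof.
  intros he hP hb.
  set (bucket := fun n => Z.to_nat (up ((s n + B) / eta))).
  destruct (infinitely_often_pigeonhole (S (Z.to_nat (up (2 * B / eta)))) bucket P hP) as [k hk].
  - intros n hn. unfold bucket. specialize (hb n hn). apply Rabs_le_between in hb.
    assert (hle : (s n + B) / eta <= 2 * B / eta)
      by (apply Rmult_le_compat_r; [left; apply Rinv_0_lt_compat|]; lra).
    apply up_le in hle. lia.
  - exists (fun n => P n /\ bucket n = k). split; [intros n [h _]; auto|split; auto].
    intros n n' [h1 e1] [h2 e2]. unfold bucket in e1, e2.
    pose proof (hb n h1) as b1. pose proof (hb n' h2) as b2.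
    apply Rabs_le_between in b1. apply Rabs_le_between in b2.
    assert (0 <= (s n + B) / eta) by (apply Rmult_le_pos; [|left; apply Rinv_0_lt_compat]; lra).
    assert (0 <= (s n' + B) / eta) by (apply Rmult_le_pos; [|left; apply Rinv_0_lt_compat]; lra).
    destruct (archimed ((s n + B) / eta)) as [a1 a2].
    destruct (archimed ((s n' + B) / eta)) as [c1 c2].
    assert (p1 : (0 < up ((s n + B) / eta))%Z) by (apply lt_IZR; lra).
    assert (p2 : (0 < up ((s n' + B) / eta))%Z) by (apply lt_IZR; lra).
    assert (e : up ((s n + B) / eta) = up ((s n' + B) / eta)) by lia.
    rewrite e in a1, a2.
    assert (hlt : Rabs ((s n - s n') / eta) < 1).
    { replace ((s n - s n') / eta) with ((s n + B) / eta - (s n' + B) / eta) by (field; lra).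
      apply Rabs_def1; lra. }
    unfold Rdiv in hlt. rewrite Rabs_mult, Rabs_inv, (Rabs_right eta) in hlt by lra.
    apply (Rmult_lt_compat_r eta) in hlt; auto. rewrite Rmult_assoc, Rinv_l, Rmult_1_r in hlt; lra.
Qed.

Lemma infinitely_often_close_coords (u : nat -> nat -> C) B eta m (P : nat -> Prop) :
  0 < eta -> infinitely_often P -> (forall n j, P n -> Cabs (u n j) <= B) ->
  exists P', (forall n, P' n -> P n) /\ infinitely_often P' /\
    forall n n' j, (j < m)%nat -> P' n -> P' n' -> Cabs (Cadd (u n j) (Copp (u n' j))) <= 2 * eta.
Proof.
  intros he hP hb. induction m as [|m [P1 [h1 [h2 h3]]]].
  - exists P; repeat split; auto. intros; lia.
  - destruct (infinitely_often_close (fun n => fst (u n m)) B eta P1 he h2) as [P2 [g1 [g2 g3]]].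
    { intros n hn. eapply Rle_trans; [apply Cabs_fst|auto]. }
    destruct (infinitely_often_close (fun n => snd (u n m)) B eta P2 he g2) as [P3 [k1 [k2 k3]]].
    { intros n hn. eapply Rle_trans; [apply Cabs_snd|auto]. }
    exists P3; repeat split; auto. intros n n' j hj hn hn'.
    destruct (Nat.eq_dec j m) as [->|ne]; [|apply h3; auto; lia].
    eapply Rle_trans; [apply Cabs_le_Rabs_fst_snd|]. simpl.
    pose proof (g3 n n' (k1 n hn) (k1 n' hn')). pose proof (k3 n n' hn hn'). simpl in *.
    unfold Rminus in *. lra.
Qed.

(** * The gliding hump *)

Section GlidingHump.
Variables (p q : R) (T J : (nat -> C) -> (nat -> C)).
Hypotheses (hp : 1 <= p) (hq : 1 <= q).
Hypotheses (hT : bounded_op (lp p) (lp p) T) (hJ : bounded_op (lp p) (lp q) J).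
Variables (CJ M K : R).
Hypotheses (hCJ : 0 < CJ) (hM : 0 < M) (hK : 0 <= K).
Hypothesis hJb : forall x, in_lp p x -> lp_norm q (J x) <= CJ * lp_norm p x.
Hypothesis hlow : forall x, in_lp p x -> lp_norm p x <= M * lp_norm q (J x) + K * lp_norm p (T x).
Variables (phi : nat -> nat) (y : nat -> C).
Hypothesis hphi : forall n, (phi n < phi (S n))%nat.
Hypothesis hy : in_lp p y.
Hypothesis hcv : Un_cv (fun n => lp_norm p (ssub (T (basis (phi n))) y)) 0.

Lemma phi_lt a b : (a < b)%nat -> (phi a < phi b)%nat.
Proof. intro h; induction h; [apply hphi|specialize (hphi m); lia]. Qed.

Definition basis_diff (a b : nat) : nat -> C := ssub (basis (phi a)) (basis (phi b)).

Lemma in_lp_basis_diff a b : in_lp p (basis_diff a b).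
Proof. apply lp_sub; auto; apply lp_basis; auto. Qed.

Lemma T_basis_diff_small d : 0 < d ->
  exists N0, forall a b, (N0 <= a)%nat -> (N0 <= b)%nat -> lp_norm p (T (basis_diff a b)) <= d.
Proof.
  intro hd. destruct (hcv (d / 2)) as [N0 hN0]; [lra|]. exists N0. intros a b ha hb.
  assert (hmem : forall n, in_lp p (ssub (T (basis (phi n))) y))
    by (intro n; apply lp_sub; auto; apply (lp_op_in_lp p p T hT), lp_basis; auto).
  assert (e : T (basis_diff a b)
              = ssub (ssub (T (basis (phi a))) y) (ssub (T (basis (phi b))) y)).
  { unfold basis_diff. rewrite (lp_op_sub p p T hT) by (apply lp_basis; auto).
    apply functional_extensionality; intro n; unfold ssub, sadd, sopp.
    destruct (T (basis (phi a)) n), (T (basis (phi b)) n), (y n).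
    unfold Cadd, Copp; simpl; f_equal; ring. }
  rewrite e. destruct (lp_sub p _ _ hp (hmem a) (hmem b)) as [_ h].
  pose proof (hN0 a ha) as ea. pose proof (hN0 b hb) as eb. unfold Rdist in ea, eb.
  rewrite Rminus_0_r, Rabs_right in ea, eb by apply Rle_ge, lp_norm_ge0. lra.
Qed.

Definition T_tol (i : nat) : R := / (2 * (K + 1)) * (/ 2) ^ i.
Definition rest_bound : R := Rmin 1 (/ (4 * M)).
Definition J_tol (i : nat) : R := rest_bound / 2 * (/ 2) ^ i.
Definition mass_tol (i : nat) : R := rpow (J_tol i) q / 2.

Lemma rest_bound_pos : 0 < rest_bound.
Proof.
  unfold rest_bound, Rmin. destruct (Rle_dec 1 (/ (4 * M))); [lra|]. apply Rinv_0_lt_compat; lra.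
Qed.

Lemma J_tol_pos i : 0 < J_tol i.
Proof.
  pose proof rest_bound_pos. unfold J_tol. apply Rmult_lt_0_compat; [lra|apply pow_lt; lra].
Qed.

Lemma one_le_rpow_2 : 1 <= rpow 2 (1 / p).
Proof. apply one_le_rpow; [lra|apply Rlt_le, Rdiv_lt_0_compat; lra]. Qed.

Lemma mass_tol_pos i : 0 < mass_tol i.
Proof. unfold mass_tol; apply Rdiv_lt_0_compat; [apply rpow_gt0, J_tol_pos|lra]. Qed.

(* [a] and [b] select the [i]-th hump [e_(phi a) - e_(phi b)]; its image under [J] has
   mass at most [mass_tol i] before [m] and from [m'] on. *)
Definition hump_spec (i m N a b m' : nat) : Prop :=
  (N <= a)%nat /\ (a < b)%nat /\ (m < m')%nat /\
  lp_norm p (T (basis_diff a b)) <= T_tol i /\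
  (exists l, infinite_sum (trunc_lt m (pterm q (J (basis_diff a b)))) l /\ l <= mass_tol i) /\
  (exists l, infinite_sum (trunc_ge m' (pterm q (J (basis_diff a b)))) l /\ l <= mass_tol i).

Lemma J_basis_diff a b j :
  J (basis_diff a b) j = Cadd (J (basis (phi a)) j) (Copp (J (basis (phi b)) j)).
Proof. unfold basis_diff; rewrite (lp_op_sub p q J hJ) by (apply lp_basis; auto). reflexivity. Qed.

Lemma hump_exists i m N : exists a b m', hump_spec i m N a b m'.
Proof.
  destruct (T_basis_diff_small (T_tol i)) as [NT hNT].
  { unfold T_tol; apply Rmult_lt_0_compat; [apply Rinv_0_lt_compat; lra|apply pow_lt; lra]. }
  set (c := mass_tol i / (INR m + 1)).
  assert (hc : 0 < c) by (apply Rdiv_lt_0_compat; [apply mass_tol_pos|pose proof (pos_INR m); lra]).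
  set (eta := rpow c (1 / q) / 2).
  assert (heta : 0 < eta) by (apply Rdiv_lt_0_compat; [apply rpow_gt0; auto|lra]).
  destruct (infinitely_often_close_coords (fun n => J (basis (phi n))) CJ eta m
              (fun n => (NT <= n)%nat /\ (N <= n)%nat)) as [P [hP1 [hP2 hP3]]]; auto.
  { intro N0. exists (max N0 (max NT N)); repeat split; lia. }
  { intros n j _. destruct (lp_basis p (phi n) hp) as [hm hn].
    eapply Rle_trans; [apply (Cabs_le_lp_norm q); auto; apply (lp_op_in_lp p q J hJ); auto|].
    rewrite <- (Rmult_1_r CJ), <- hn. auto. }
  destruct (infinitely_often_pair P N hP2) as [a [b [hNa [hab [pa pb]]]]].
  set (g := pterm q (J (basis_diff a b))).
  destruct ((lp_op_in_lp p q J hJ) _ (in_lp_basis_diff a b)) as [Sg hSg].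
  destruct (trunc_ge_small g Sg (mass_tol i) (pterm_ge0 _ _) hSg (mass_tol_pos i)) as [m0 hm0].
  exists a, b, (max m0 (S m)). repeat split; auto; try lia.
  - destruct (hP1 a pa), (hP1 b pb). apply hNT; auto.
  - destruct (trunc_lt_small g m c (Rlt_le _ _ hc)) as [l [hl1 hl2]].
    + intros j hj. split; [apply pterm_ge0|]. unfold g, pterm. rewrite J_basis_diff.
      replace c with (rpow (2 * eta) q)
        by (unfold eta; rewrite Rmult_div_assoc, Rmult_div_r, rpow_inv_rpow by lra; auto).
      apply rpow_le; [split; [apply Cabs_ge0|apply hP3; auto]|lra].
    + exists l; split; auto. eapply Rle_trans; [apply hl2|]. unfold c.
      pose proof (pos_INR m). pose proof (mass_tol_pos i).
      apply (Rmult_le_reg_r (INR m + 1)); [lra|]. field_simplify; lra.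
  - apply hm0; lia.
Qed.

Definition choose_hump (i m N : nat) : nat * nat * nat :=
  epsilon (inhabits (0%nat, 0%nat, 0%nat))
    (fun t => hump_spec i m N (fst (fst t)) (snd (fst t)) (snd t)).

Lemma choose_hump_spec i m N :
  hump_spec i m N (fst (fst (choose_hump i m N))) (snd (fst (choose_hump i m N)))
    (snd (choose_hump i m N)).
Proof.
  unfold choose_hump. apply (epsilon_spec (inhabits (0%nat, 0%nat, 0%nat))
    (fun t => hump_spec i m N (fst (fst t)) (snd (fst t)) (snd t))).
  destruct (hump_exists i m N) as [a [b [m' h]]]. exists (a, b, m'); auto.
Qed.

(* The pair (cut point [m], lower bound [N] for the next hump index) before hump [i]. *)
Fixpoint hump_state (i : nat) : nat * nat :=
  match i with
  | O => (0%nat, 0%nat)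
  | S i' => let t := choose_hump i' (fst (hump_state i')) (snd (hump_state i')) in
            (snd t, S (snd (fst t)))
  end.

Definition cut (i : nat) : nat := fst (hump_state i).
Definition hump_a (i : nat) : nat := fst (fst (choose_hump i (cut i) (snd (hump_state i)))).
Definition hump_b (i : nat) : nat := snd (fst (choose_hump i (cut i) (snd (hump_state i)))).
Definition hump (i : nat) : nat -> C := basis_diff (hump_a i) (hump_b i).

Lemma hump_state_spec i :
  hump_spec i (cut i) (snd (hump_state i)) (hump_a i) (hump_b i) (cut (S i)).
Proof. apply choose_hump_spec. Qed.

Lemma hump_a_lt_b i : (hump_a i < hump_b i)%nat.
Proof. apply (hump_state_spec i). Qed.

Lemma hump_b_lt_a i : (hump_b i < hump_a (S i))%nat.
Proof. destruct (hump_state_spec (S i)) as [h _]. simpl in h. unfold hump_b, cut; lia. Qed.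

Lemma cut_lt i : (cut i < cut (S i))%nat.
Proof. apply (hump_state_spec i). Qed.

Lemma infinite_sum_pterm_hump i : infinite_sum (pterm p (hump i)) 2.
Proof. apply infinite_sum_pterm_basis_sub; auto. pose proof (phi_lt _ _ (hump_a_lt_b i)); lia. Qed.

Lemma lp_norm_hump i : lp_norm p (hump i) = rpow 2 (1 / p).
Proof. apply lp_norm_eq, infinite_sum_pterm_hump. Qed.

Lemma hump_support i j : (j < phi (hump_a i) \/ phi (hump_a (S i)) <= j)%nat -> hump i j = C0.
Proof.
  intro h. pose proof (phi_lt _ _ (hump_a_lt_b i)). pose proof (phi_lt _ _ (hump_b_lt_a i)).
  unfold hump, basis_diff, ssub, sadd, sopp. rewrite !basis_neq by lia.
  unfold Cadd, Copp, C0; simpl; f_equal; ring.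
Qed.

Lemma lp_norm_T_hump i : lp_norm p (T (hump i)) <= T_tol i.
Proof. apply (hump_state_spec i). Qed.

Lemma lp_norm_J_hump_ge i : / (2 * M) <= lp_norm q (J (hump i)).
Proof.
  pose proof (hlow _ (in_lp_basis_diff (hump_a i) (hump_b i))) as h. fold (hump i) in h.
  rewrite lp_norm_hump in h. pose proof one_le_rpow_2.
  assert (K * lp_norm p (T (hump i)) <= / 2).
  { eapply Rle_trans; [apply Rmult_le_compat_l; [auto|apply lp_norm_T_hump]|]. unfold T_tol.
    assert ((/ 2) ^ i <= 1) by (apply pow_le_1; lra). pose proof (pow_le (/ 2) i ltac:(lra)).
    assert (K * / (2 * (K + 1)) <= / 2)
        by (apply (Rmult_le_reg_r (2 * (K + 1))); [lra|]; field_simplify; lra).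
    pose proof (Rinv_0_lt_compat (2 * (K + 1)) ltac:(lra)). nra. }
  apply (Rmult_le_reg_l M); auto. replace (M * / (2 * M)) with (/ 2) by (field; lra). lra.
Qed.

Definition block_bound : R := CJ * rpow 2 (1 / p).
Definition window (i j : nat) : bool := (Nat.leb (cut i) j && Nat.ltb j (cut (S i)))%bool.
Definition block (i : nat) : nat -> C := srestrict (window i) (J (hump i)).
Definition rest (i : nat) : nat -> C := srestrict (fun j => negb (window i j)) (J (hump i)).

Lemma in_lp_J_hump i : in_lp q (J (hump i)).
Proof. apply (lp_op_in_lp p q J hJ), in_lp_basis_diff. Qed.

Lemma lp_block i : in_lp q (block i) /\ lp_norm q (block i) <= block_bound.
Proof.
  destruct (lp_dominated q (block i) (J (hump i))) as [hm hn];
    [lra|apply Cabs_srestrict_le|apply in_lp_J_hump|].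
  split; auto. eapply Rle_trans; [apply hn|]. unfold block_bound; rewrite <- (lp_norm_hump i).
  apply hJb, in_lp_basis_diff.
Qed.

Lemma lp_rest i : in_lp q (rest i) /\ lp_norm q (rest i) <= J_tol i.
Proof.
  destruct (hump_state_spec i) as [_ [_ [_ [_ [[l1 [h1 e1]] [l2 [h2 e2]]]]]]].
  fold (hump i) in h1, h2.
  set (g := pterm q (J (hump i))) in h1, h2.
  assert (hpt : forall n, 0 <= pterm q (rest i) n
      <= trunc_lt (cut i) g n + trunc_ge (cut (S i)) g n).
  { intro n. split; [apply pterm_ge0|].
    unfold g, pterm, rest, srestrict, trunc_lt, trunc_ge, window.
    pose proof (rpow_ge0 (Cabs (J (hump i) n)) q).
    destruct (Nat.leb_spec (cut i) n), (Nat.ltb_spec n (cut (S i))), (Nat.ltb_spec n (cut i)),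
      (Nat.leb_spec (cut (S i)) n); simpl; try (rewrite Cabs_C0, rpow_0_l); try lra; lia. }
  destruct (infinite_sum_le_compare _ _ _ hpt (infinite_sum_plus _ _ _ _ h1 h2)) as [S0 [hS0 hle]].
  split; [exists S0; auto|]. rewrite (lp_norm_eq _ _ _ hS0).
  rewrite <- (rpow_rpow_inv (J_tol i) q) by (pose proof (J_tol_pos i); lra).
  apply rpow_le; [split; [eapply infinite_sum_ge0; [apply pterm_ge0|eauto]|]|].
  - unfold mass_tol in e1, e2. lra.
  - left; apply Rdiv_lt_0_compat; lra.
Qed.

Lemma lp_norm_block_ge i : / (4 * M) <= lp_norm q (block i).
Proof.
  pose proof (lp_norm_J_hump_ge i). destruct (lp_block i) as [hb _].
  destruct (lp_rest i) as [hr hrn].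
  destruct (lp_triangle q _ _ hq hb hr) as [_ h].
  replace (sadd (block i) (rest i)) with (J (hump i)) in h by apply sadd_srestrict_compl.
  assert (J_tol i <= / (4 * M)).
  { unfold J_tol. assert (rest_bound <= / (4 * M)) by apply Rmin_r.
    assert ((/ 2) ^ i <= 1) by (apply pow_le_1; lra). pose proof (pow_le (/ 2) i ltac:(lra)).
    pose proof rest_bound_pos. nra. }
  assert (/ (2 * M) = 2 * / (4 * M)) by (field; lra). lra.
Qed.

Lemma block_support i j : (j < cut i \/ cut (S i) <= j)%nat -> block i j = C0.
Proof.
  intro h. unfold block, srestrict, window.
  destruct (Nat.leb_spec (cut i) j), (Nat.ltb_spec j (cut (S i))); simpl; auto; lia.
Qed.

Lemma lp_hump_sum N : in_lp p (ssum hump N) /\ lp_norm p (ssum hump N) = rpow (2 * INR N) (1 / p).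
Proof.
  assert (hmono : forall i, (phi (hump_a i) <= phi (hump_a (S i)))%nat).
  { intro i. pose proof (hump_a_lt_b i). pose proof (hump_b_lt_a i).
    apply Nat.lt_le_incl, phi_lt; lia. }
  assert (hblk : forall i, exists l, infinite_sum (pterm p (hump i)) l /\ 2 <= l <= 2)
    by (intro i; exists 2; split; [apply infinite_sum_pterm_hump|lra]).
  destruct (infinite_sum_pterm_ssum_disjoint p 2 2 hump _ ltac:(lra) hmono hump_support hblk N)
    as [l [hl hb]].
  split; [exists l; auto|]. rewrite (lp_norm_eq _ _ _ hl). f_equal. lra.
Qed.

Lemma lp_norm_T_hump_sum N : lp_norm p (T (ssum hump N)) <= / (K + 1).
Proof.
  destruct (lp_op_ssum p p T hp hT hump N) as [_ e]; [intro; apply in_lp_basis_diff|].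
  rewrite e. replace (/ (K + 1)) with (2 * / (2 * (K + 1))) by (field; lra).
  apply lp_ssum_geometric; auto. intro i. split.
  - apply (lp_op_in_lp p p T hT), in_lp_basis_diff.
  - apply lp_norm_T_hump.
Qed.

Lemma J_hump_sum N : J (ssum hump N) = sadd (ssum block N) (ssum rest N).
Proof.
  destruct (lp_op_ssum p q J hp hJ hump N) as [_ e]; [intro; apply in_lp_basis_diff|].
  rewrite e, <- ssum_sadd. f_equal. apply functional_extensionality; intro i.
  apply sadd_srestrict_compl.
Qed.

Lemma lp_rest_sum N : in_lp q (ssum rest N) /\ lp_norm q (ssum rest N) <= 1.
Proof.
  destruct (lp_ssum_geometric q rest (rest_bound / 2) N hq) as [hm hn]; [apply lp_rest|].
  split; auto. assert (rest_bound <= 1) by apply Rmin_l. lra.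
Qed.

Lemma lp_block_sum N : in_lp q (ssum block N) /\
  / (4 * M) * rpow (INR N) (1 / q) <= lp_norm q (ssum block N)
      <= block_bound * rpow (INR N) (1 / q).
Proof.
  assert (hlo : 0 < / (4 * M)) by (apply Rinv_0_lt_compat; lra).
  assert (hbb : 0 <= block_bound) by (unfold block_bound; pose proof (rpow_ge0 2 (1 / p)); nra).
  assert (hblk : forall i, exists l, infinite_sum (pterm q (block i)) l /\
                                       rpow (/ (4 * M)) q <= l <= rpow block_bound q).
  { intro i. destruct (lp_block i) as [[l hl] hn]. exists l. split; auto.
    rewrite <- (rpow_lp_norm q (block i) l hq hl).
    pose proof (lp_norm_block_ge i). split; apply rpow_le; lra. }
  destruct (infinite_sum_pterm_ssum_disjoint q _ _ block cut ltac:(lra)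
              (fun i => Nat.lt_le_incl _ _ (cut_lt i)) block_support hblk N) as [l [hl hb]].
  split; [exists l; auto|]. rewrite (lp_norm_eq _ _ _ hl).
  assert (hq0 : 0 <= 1 / q) by (apply Rlt_le, Rdiv_lt_0_compat; lra).
  pose proof (pos_INR N). pose proof (rpow_ge0 (/ (4 * M)) q). pose proof (rpow_ge0 block_bound q).
  rewrite <- (rpow_rpow_inv (/ (4 * M)) q) at 1 by lra.
  rewrite <- (rpow_rpow_inv block_bound q) at 1 by lra.
  rewrite <- !rpow_mult_distr by auto.
  split; apply rpow_le; auto; split; nra.
Qed.

Lemma hump_sum_bounds N :
  rpow (INR N) (1 / p) <= M * block_bound * rpow (INR N) (1 / q) + (M + 1) /\
  / (4 * M) * rpow (INR N) (1 / q) <= block_bound * rpow (INR N) (1 / p) + 1.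
Proof.
  destruct (lp_hump_sum N) as [hW eW]. destruct (lp_block_sum N) as [hB [hB1 hB2]].
  destruct (lp_rest_sum N) as [hR hRn]. pose proof (lp_norm_T_hump_sum N) as hTW.
  rewrite rpow_mult_distr in eW by (auto using pos_INR; lra).
  pose proof one_le_rpow_2.
  pose proof (rpow_ge0 (INR N) (1 / p)). pose proof (lp_norm_ge0 q (J (ssum hump N))).
  destruct (lp_triangle q _ _ hq hB hR) as [_ hJW]. rewrite <- J_hump_sum in hJW.
  assert (hBJ : lp_norm q (ssum block N) <= lp_norm q (J (ssum hump N)) + lp_norm q (ssum rest N)).
  { replace (ssum block N) with (ssub (J (ssum hump N)) (ssum rest N)).
    - apply lp_sub; auto. rewrite J_hump_sum. apply lp_triangle; auto.
    - rewrite J_hump_sum. apply functional_extensionality; intro j. unfold ssub, sadd, sopp.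
      destruct (ssum block N j), (ssum rest N j); unfold Cadd, Copp; simpl; f_equal; ring. }
  assert (K * lp_norm p (T (ssum hump N)) <= 1).
  { pose proof (lp_norm_ge0 p (T (ssum hump N))).
    assert (K * / (K + 1) <= 1) by (apply (Rmult_le_reg_r (K + 1)); [lra|]; field_simplify; lra).
    pose proof (Rinv_0_lt_compat (K + 1) ltac:(lra)). nra. }
  pose proof (hlow _ hW) as l1. pose proof (hJb _ hW) as l2. rewrite eW in l1, l2.
  split; [|unfold block_bound; nra].
  assert (M * lp_norm q (J (ssum hump N)) <= M * (block_bound * rpow (INR N) (1 / q) + 1))
    by (apply Rmult_le_compat_l; lra).
  nra.
Qed.

Lemma gliding_hump_contradiction : p <> q -> False.
Proof.
  intro hpq.
  assert (hip : 0 < 1 / p) by (apply Rdiv_lt_0_compat; lra).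
  assert (hiq : 0 < 1 / q) by (apply Rdiv_lt_0_compat; lra).
  assert (h4M : 0 < 4 * M) by lra.
  destruct (Rlt_or_le p q) as [hlt|hge].
  - assert (1 / q < 1 / p) by (unfold Rdiv; rewrite !Rmult_1_l; apply Rinv_lt_contravar; nra).
    destruct (rpow_growth (1 / p) (1 / q) (M * block_bound) (M + 1)) as [N hN]; [lra|].
    destruct (hump_sum_bounds N); lra.
  - assert (1 / p < 1 / q) by (unfold Rdiv; rewrite !Rmult_1_l; apply Rinv_lt_contravar; nra).
    destruct (rpow_growth (1 / q) (1 / p) (4 * M * block_bound) (4 * M)) as [N hN]; [lra|].
    destruct (hump_sum_bounds N) as [_ h].
    apply (Rmult_le_compat_l (4 * M)) in h; [|lra].
    rewrite <- Rmult_assoc, Rinv_r, Rmult_1_l in h by lra. lra.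
Qed.

End GlidingHump.

(** * Reduction to the gliding hump *)

Lemma le_sqrt_sum_sq_l a b : 0 <= a -> a <= sqrt (a ^ 2 + b ^ 2).
Proof. intro h. rewrite <- (sqrt_pow2 a) at 1 by auto. apply sqrt_le_1_alt. nra. Qed.

Lemma le_sqrt_sum_sq_r a b : 0 <= b -> b <= sqrt (a ^ 2 + b ^ 2).
Proof. intro h. rewrite <- (sqrt_pow2 b) at 1 by auto. apply sqrt_le_1_alt. nra. Qed.

Lemma sqrt_sum_sq_le a b : 0 <= a -> 0 <= b -> sqrt (a ^ 2 + b ^ 2) <= a + b.
Proof. intros. rewrite <- (sqrt_pow2 (a + b)) by lra. apply sqrt_le_1_alt. nra. Qed.

Section BanachZero.
Variable V : VS.
Hypothesis hV : is_banach V.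

Lemma banach_vadd_zero : vadd (@vzero V) vzero = vzero.
Proof. destruct hV as [m0 [_ [_ [_ [_ [_ [add0 _]]]]]]]. auto. Qed.

Lemma banach_vscal_zero c : vscal c (@vzero V) = vzero.
Proof.
  destruct hV as [m0 [_ [mopp [msc [assoc [_ [add0 [addopp [_ [_ [scadd _]]]]]]]]]]].
  set (u := vscal c (@vzero V)). assert (hu : mem u) by (apply msc; auto).
  assert (uu : vadd u u = u) by (unfold u; rewrite <- scadd, banach_vadd_zero; auto).
  transitivity (vadd (vadd u u) (vopp u)).
  - rewrite <- assoc, addopp, add0; auto.
  - rewrite uu. apply addopp; auto.
Qed.

Lemma banach_vnorm_zero : vnorm (@vzero V) = 0.
Proof.
  destruct hV as [m0 [_ [_ [_ [_ [_ [_ [_ [_ [_ [_ [_ [_ [_ [nsc _]]]]]]]]]]]]]]].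
  rewrite <- (banach_vscal_zero C0), nsc, Cabs_C0, Rmult_0_l; auto.
Qed.

End BanachZero.

Lemma dsum_lp_norm_inl r (X' : VS) (x : nat -> C) : is_banach X' ->
  @vnorm (dsum (lp r) X') (x, vzero) = lp_norm r x.
Proof.
  intro hX'. change (sqrt (lp_norm r x ^ 2 + (@vnorm X' vzero) ^ 2) = lp_norm r x).
  rewrite banach_vnorm_zero, pow_i, Rplus_0_r by (auto; lia). apply sqrt_pow2, lp_norm_ge0.
Qed.

Section Reduction.
Variables (p q : R) (X' Y' : VS) (T : car (lp p) -> car (lp p)) (S : car (lp q) -> car (lp q)).
Hypotheses (hX' : is_banach X') (hY' : is_banach Y').
Hypotheses (hT : bounded_op (lp p) (lp p) T) (hS : bounded_op (lp q) (lp q) S).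
Variables (E gF : car (dsum (lp q) Y') -> car (dsum (lp p) X'))
          (F gE : car (dsum (lp p) X') -> car (dsum (lp q) Y')).
Hypotheses (hF : bounded_op _ _ F) (hgF : bounded_op _ _ gF) (hgE : bounded_op _ _ gE).
Hypothesis hgFF : forall z, mem z -> gF (F z) = z.
Hypothesis hgEE : forall z, mem z -> gE (E z) = z.
Hypothesis heq : forall z, @mem (dsum (lp p) X') z -> op_dsum_id X' T z = E (op_dsum_id Y' S (F z)).

Definition F_inl (x : nat -> C) : nat -> C := fst (F (x, vzero)).

Lemma bounded_op_F_inl : bounded_op (lp p) (lp q) F_inl.
Proof.
  assert (zm : @mem X' vzero) by apply hX'.
  destruct (bounded_op_pos_bound _ _ F hF) as [MF [hMF hFb]]; [intros; apply sqrt_pos|].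
  destruct hF as [hFm [hFadd [hFsc _]]].
  repeat split.
  - intros x hx. apply (hFm (x, vzero)). split; auto.
  - intros x y hx hy. pose proof (hFadd (x, vzero) (y, vzero) (conj hx zm) (conj hy zm)) as h.
    simpl in h. rewrite banach_vadd_zero in h by auto. unfold F_inl; simpl. rewrite h. reflexivity.
  - intros c x hx. pose proof (hFsc c (x, vzero) (conj hx zm)) as h.
    simpl in h. rewrite banach_vscal_zero in h by auto. unfold F_inl; simpl. rewrite h. reflexivity.
  - exists MF. intros x hx. pose proof (hFb (x, vzero) (conj hx zm)) as h.
    rewrite dsum_lp_norm_inl in h by auto. eapply Rle_trans; [|exact h]. unfold F_inl.
    apply (le_sqrt_sum_sq_l _ (vnorm (snd (F (x, vzero))))), lp_norm_ge0.
Qed.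

(* [x = gF (F (x, 0))] bounds [x] by both components [(u, v)] of [F (x, 0)], and
   [(S u, v) = gE (T x, 0)] bounds [v] by [T x]. *)
Lemma lower_estimate_mod_T : exists M K, 0 < M /\ 0 <= K /\
  forall x, in_lp p x -> lp_norm p x <= M * lp_norm q (F_inl x) + K * lp_norm p (T x).
Proof.
  assert (zm : @mem X' vzero) by apply hX'.
  assert (hnY : forall v, @mem Y' v -> 0 <= vnorm v) by apply hY'.
  destruct (bounded_op_pos_bound _ _ gF hgF) as [MG [hMG hGb]]; [intros; apply sqrt_pos|].
  destruct (bounded_op_pos_bound _ _ gE hgE) as [ME [hME hEb]]; [intros; apply sqrt_pos|].
  exists MG, (MG * ME). split; [auto|split; [nra|]]. intros x hx.
  assert (hz : @mem (dsum (lp p) X') (x, vzero)) by (split; auto).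
  assert (hFz := proj1 hF _ hz).
  pose proof (hGb _ hFz) as h1. rewrite hgFF, dsum_lp_norm_inl in h1 by auto.
  assert (hTx : @mem (dsum (lp p) X') (T x, vzero)) by (split; auto; apply hT; auto).
  assert (e : gE (T x, vzero) = op_dsum_id Y' S (F (x, vzero))).
  { change (T x, @vzero X') with (op_dsum_id X' T (x, vzero)). rewrite heq by auto.
    apply hgEE. destruct hFz; split; auto. apply hS; auto. }
  pose proof (hEb _ hTx) as h2. rewrite e, dsum_lp_norm_inl in h2 by auto.
  assert (hv := hnY _ (proj2 hFz)).
  assert (hs1 : vnorm (F (x, vzero)) <= lp_norm q (F_inl x) + vnorm (snd (F (x, vzero))))
    by (apply sqrt_sum_sq_le; [apply lp_norm_ge0|auto]).
  assert (hs2 : vnorm (snd (F (x, vzero))) <= ME * lp_norm p (T x))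
    by (eapply Rle_trans; [apply (le_sqrt_sum_sq_r (lp_norm q (S (F_inl x)))); auto|exact h2]).
  assert (MG * vnorm (F (x, vzero)) <= MG * (lp_norm q (F_inl x) + ME * lp_norm p (T x)))
    by (apply Rmult_le_compat_l; lra).
  lra.
Qed.

End Reduction.

Lemma equiv_after_ext_sym (X Y : VS) T S : (forall y, @mem Y y -> mem (S y)) ->
  equiv_after_ext X Y T S -> equiv_after_ext Y X S T.
Proof.
  intros hS [X' [Y' [hX' [hY' [E [F [hE [hF heq]]]]]]]].
  destruct hE as [hEb [gE [hgE [hgEE hEgE]]]]. destruct hF as [hFb [gF [hgF [hgFF hFgF]]]].
  exists Y', X'. split; [auto|split; [auto|]]. exists gE, gF.
  split; [split; [auto|exists E; auto]|split; [split; [auto|exists F; auto]|]].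
  intros z hz. assert (hgz : mem (gF z)) by (apply hgF; auto).
  rewrite (heq (gF z) hgz), hFgF, hgEE; auto.
  destruct hz as [hz1 hz2]. split; [apply hS; auto|auto].
Qed.

Lemma not_equiv_after_ext_of_compact_l p q (hp : 1 <= p) (hq : 1 <= q) (hpq : p <> q)
  (T : car (lp p) -> car (lp p)) (S : car (lp q) -> car (lp q))
  (hT : bounded_op (lp p) (lp p) T) (hS : bounded_op (lp q) (lp q) S)
  (hc : compact_op (lp p) (lp p) T) :
  ~ equiv_after_ext (lp p) (lp q) T S.
Proof.
  intros [X' [Y' [hX' [hY' [E [F [[_ [gE [hgE [hgEE _]]]] [[hF [gF [hgF [hgFF _]]]] heq]]]]]]]].
  destruct (lower_estimate_mod_T p q X' Y' T S hX' hY' hT hS E gF F gE hF hgF hgE hgFF hgEE heq)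
    as [M [K [hM [hK hlow]]]].
  set (J := F_inl p q X' Y' F) in hlow.
  assert (hJ : bounded_op (lp p) (lp q) J) by apply (bounded_op_F_inl p q X' Y' hX' F hF).
  destruct (lp_op_bound p q J hJ) as [CJ [hCJ hJb]].
  destruct (hc basis) as [phi [y [hphi [hy hcv]]]].
  { intro n; destruct (lp_basis p n hp)
      as [hm hn]; split; [exact hm|change (lp_norm p (basis n) <= 1); lra]. }
  exact (gliding_hump_contradiction p q T J hp hq hT hJ CJ M K hCJ hM hK hJb hlow
           phi y hphi hy hcv hpq).
Qed.

Theorem proposition4p5 (p q : R) (hp : 1 <= p) (hq : 1 <= q) (hpq : p <> q)
  (T : car (lp p) -> car (lp p)) (S : car (lp q) -> car (lp q))
  (hT : bounded_op (lp p) (lp p) T) (hS : bounded_op (lp q) (lp q) S)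
  (hc : compact_op (lp p) (lp p) T \/ compact_op (lp q) (lp q) S) :
  ~ equiv_after_ext (lp p) (lp q) T S.
Proof.
  destruct hc as [hcT|hcS].
  - exact (not_equiv_after_ext_of_compact_l p q hp hq hpq T S hT hS hcT).
  - intro h. apply (not_equiv_after_ext_of_compact_l q p hq hp (not_eq_sym hpq) S T hS hT hcS).
    apply equiv_after_ext_sym; [apply hS|exact h].
Qed.
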